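(* Consider the continuous-time system $\dot x=Ax+Bu+Lf(t,z)$, $z=Hx$, with $A,B$ unknown, $L\in\mathbb{R}^{n\times p}$ and $H\in\mathbb{R}^{p\times n}$ known, and data $U_0,X_0,X_1,F_0$ (with $X_1$ containing sampled state derivatives) satisfying $X_1=AX_0+BU_0+LF_0$. Suppose there exists $Y\in\mathbb{R}^{T\times n}$ such that $X_0Y$ is symmetric positive definite, $Y^\top(X_1-LF_0)^\top+(X_1-LF_0)Y\prec 0$, and $L+X_0YH^\top=0$. Then with $K=U_0Y(X_0Y)^{-1}$ the origin of the closed-loop system $\dot x=(A+BK)x+Lf(t,Hx)$ is globally uniformly asymptotically stable for every passive nonlinearity $f$, i.e. every $f:\mathbb{R}\times\mathbb{R}^p\to\mathbb{R}^p$ (piecewise continuous in $t$, locally Lipschitz in $z$) with $z^\top f(t,z)\ge 0$ for all $t,z$.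
   Context: Data: $U_0=[u(t_0)\cdots u(t_{T-1})]$, $X_0=[x(t_0)\cdots x(t_{T-1})]$, $X_1=[\dot x(t_0)\cdots\dot x(t_{T-1})]$, $F_0=[f(t_0,z(t_0))\cdots f(t_{T-1},z(t_{T-1}))]$ from an experiment on the system. *)

From HB Require Import structures.
From mathcomp Require Import all_boot all_order all_algebra.
From mathcomp Require Import all_classical all_reals all_analysis.
Set Implicit Arguments. Unset Strict Implicit. Unset Printing Implicit Defensive.
Import Order.TTheory GRing.Theory Num.Theory.
Import numFieldNormedType.Exports.
Local Open Scope classical_set_scope.
Local Open Scope ring_scope.

Section Defs.
Variable R : realType.

Definition locally_finite_set (S : set R) : Prop :=
  forall a b : R, finite_set (S `&` `[a, b]).

Definition sym_posdef (n : nat) (M : 'M[R]_n) : Prop :=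
  M^T = M /\ forall v : 'cV[R]_n, v != 0 -> 0 < (v^T *m M *m v) 0 0.
Definition negdef (n : nat) (M : 'M[R]_n) : Prop :=
  forall v : 'cV[R]_n, v != 0 -> (v^T *m M *m v) 0 0 < 0.

Definition passive (p : nat) (f : R -> 'cV[R]_p -> 'cV[R]_p) : Prop :=
  forall t z, 0 <= (z^T *m f t z) 0 0.

Definition piecewise_continuous_in_t (p : nat) (f : R -> 'cV[R]_p -> 'cV[R]_p) : Prop :=
  forall z, exists S : set R, locally_finite_set S /\
    forall t, ~ S t -> {for t, continuous (fun s => f s z)}.

Definition loc_lipschitz_in_z (p : nat) (f : R -> 'cV[R]_p -> 'cV[R]_p) : Prop :=
  forall t (z0 : 'cV[R]_p), exists r : R, exists c : R, 0 < r /\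
    forall z1 z2, `|z1 - z0| < r -> `|z2 - z0| < r ->
      `|f t z1 - f t z2| <= c * `|z1 - z2|.

(* x : [t0, +oo) -> R^n is a solution of xdot = F(t, x): continuous on
   [t0, +oo), and differentiable with xdot(t) = F(t, x(t)) at every t > t0
   outside a locally finite set of times (covers piecewise-C^1 solutions
   of ODEs with right-hand sides piecewise continuous in t). *)
Definition ode_solution (n : nat) (F : R -> 'cV[R]_n -> 'cV[R]_n)
    (t0 : R) (x : R -> 'cV[R]_n) : Prop :=
  {within `[t0, +oo[, continuous x} /\
  exists S : set R, locally_finite_set S /\
    forall t, t0 < t -> ~ S t -> is_derive t 1 x (F t (x t)).

(* Global uniform asymptotic stability of the origin (Khalil, Def. 4.4),
   with initial times t0 >= 0. *)
Definition GUAS (n : nat) (F : R -> 'cV[R]_n -> 'cV[R]_n) : Prop :=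
  (forall t, 0 <= t -> F t 0 = 0) /\
  (forall eps : R, 0 < eps -> exists delta : R, 0 < delta /\
     forall t0 x, 0 <= t0 -> ode_solution F t0 x -> `|x t0| < delta ->
       forall t, t0 <= t -> `|x t| < eps) /\
  (forall a : R, 0 < a -> exists c : R, 0 < c /\
     forall t0 x, 0 <= t0 -> ode_solution F t0 x -> `|x t0| < a ->
       forall t, t0 <= t -> `|x t| < c) /\
  (forall r eta : R, 0 < r -> 0 < eta -> exists T : R, 0 <= T /\
     forall t0 x, 0 <= t0 -> ode_solution F t0 x -> `|x t0| < r ->
       forall t, t0 + T <= t -> `|x t| < eta).

End Defs.

(* Write S = X0 Y, P = S^-1 and Acl = A + B K with K = U0 Y S^-1.  The data
   identity gives (X1 - L F0) Y = Acl S, so the data LMI says that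
   S Acl^T + Acl S is negative definite; congruence with P turns this into
   Acl^T P + P Acl < 0, and L = - S H^T becomes P L = - H^T.  Hence along
   x' = Acl x + L f(t, H x) the quadratic function V(x) = x^T P x satisfies
   V' = x^T (Acl^T P + P Acl) x - 2 (H x)^T f(t, H x) <= - a V by passivity.

   Piecewise continuity in t
   only matters for the existence of solutions; the stability estimates
   hold for every solution in the sense of [ode_solution]. *)

From HB Require Import structures.
From mathcomp Require Import all_boot all_order all_algebra.
From mathcomp Require Import all_classical all_reals all_analysis.
From mathcomp Require Import ring lra.
Import Order.TTheory GRing.Theory Num.Theory.
Import numFieldNormedType.Exports.
Local Open Scope classical_set_scope.
Local Open Scope ring_scope.

Set Implicit Arguments. Unset Strict Implicit. Unset Printing Implicit Defensive.

Section QuadraticForms.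
Variable R : realType.

Definition bform n (M : 'M[R]_n) (u v : 'cV[R]_n) : R := (u^T *m M *m v) 0 0.
Definition qform n (M : 'M[R]_n) (v : 'cV[R]_n) : R := bform M v v.
Definition posdef n (M : 'M[R]_n) : Prop :=
  forall v : 'cV[R]_n, v != 0 -> 0 < qform M v.

Lemma bformE n (M : 'M[R]_n) u v :
  bform M u v = \sum_i \sum_j u i 0 * M i j * v j 0.
Proof.
rewrite /bform mxE exchange_big; apply: eq_bigr => j _.
by rewrite mxE big_distrl; apply: eq_bigr => i _; rewrite !mxE.
Qed.

(* Homogeneity of degree two, to rescale onto the unit sphere. *)
Lemma qformZ n (M : 'M[R]_n) (a : R) v : qform M (a *: v) = a ^+ 2 * qform M v.
Proof.
rewrite /qform /bform.
have -> : (a *: v)^T = a *: v^T by apply/matrixP => i j; rewrite !mxE.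
by rewrite -!scalemxAl -scalemxAr !mxE mulrA -expr2.
Qed.

Lemma continuous_sum (T : topologicalType) k (F : 'I_k -> T -> R) x :
  (forall i, {for x, continuous (F i)}) ->
  {for x, continuous (fun y => \sum_(i < k) F i y)}.
Proof.
move=> Fc; rewrite -fct_sumE; elim/big_ind: _ => //.
- exact: cst_continuous.
- by move=> f g fc gc; apply: continuousD.
Qed.

Lemma qform_continuous_comp (T : topologicalType) n (M : 'M[R]_n)
    (c : T -> 'cV[R]_n) x :
  (forall i, {for x, continuous (fun y => c y i 0)}) ->
  {for x, continuous (fun y => qform M (c y))}.
Proof.
move=> cc; have -> : (fun y => qform M (c y)) =
    (fun y => \sum_i \sum_j c y i 0 * M i j * c y j 0).
  by apply: funext => y; rewrite /qform bformE.
apply: continuous_sum => i; apply: continuous_sum => j.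
by apply: continuousM; [apply: continuousM; [|exact: cst_continuous]|].
Qed.

Lemma qform_continuous n (M : 'M[R]_n) : continuous (qform M).
Proof. by move=> v; apply: qform_continuous_comp => i; exact: coord_continuous. Qed.

Lemma mx_norm_trmx m n (A : 'M[R]_(m, n)) : `|A^T| = `|A|.
Proof.
rewrite /Num.Def.normr /= !mx_normrE; apply/le_anti/andP; split.
- apply: bigmax_le => [|[i j] _]; first exact: bigmax_ge_id.
  by rewrite mxE; exact: (le_bigmax _ _ (j, i)).
- apply: bigmax_le => [|[i j] _]; first exact: bigmax_ge_id.
  by apply: le_trans (le_bigmax _ _ (j, i)); rewrite mxE.
Qed.

Lemma mx_norm_coord m n (A : 'M[R]_(m, n)) i j : `|A i j| <= `|A|.
Proof. by rewrite [leRHS]/Num.Def.normr /= mx_normrE; exact: (le_bigmax _ _ (i, j)). Qed.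

Lemma mx_norm_delta m n (i : 'I_m) (j : 'I_n) :
  `|delta_mx i j : 'M[R]_(m, n)| = 1.
Proof.
rewrite [LHS]/Num.Def.normr /= mx_normrE; apply/le_anti/andP; split.
  by apply: bigmax_le => // -[k l] _; rewrite mxE; case: (_ && _); rewrite ?normr1 ?normr0.
by apply: le_trans (le_bigmax _ _ (i, j)); rewrite /= mxE !eqxx normr1.
Qed.

(* Upper bound v^T M v <= c |v|^2 (crude bound by the sum of |M i j|). *)
Lemma qform_ub n (M : 'M[R]_n) :
  exists2 c : R, 0 < c & forall v, qform M v <= c * `|v| ^+ 2.
Proof.
pose s := \sum_i \sum_j `|M i j|.
have s_ge0 : 0 <= s by do 2!(apply: sumr_ge0 => ? _).
exists (1 + s); first by rewrite ltr_pwDl.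
move=> v; rewrite /qform bformE mulrDl mul1r.
apply: ler_wpDl; first by rewrite mulr_ge0 ?exprn_ge0.
rewrite /s mulr_suml; apply: ler_sum => i _; rewrite mulr_suml; apply: ler_sum => j _.
apply: le_trans (ler_norm _) _; rewrite !normrM expr2 mulrCA mulrA.
by apply: ler_pM => //; [apply: ler_pM|]; rewrite ?mx_norm_coord.
Qed.

Lemma unit_sphere_compact n : compact [set w : 'rV[R]_n | `|w| = 1].
Proof.
apply: bounded_closed_compact.
  by exists 1; split => // r r1 w /= ->; exact: ltW.
have -> : [set w : 'rV[R]_n | `|w| = 1] = Num.norm @^-1` [set 1] by [].
by apply: (continuous_closedP _).1; [exact: norm_continuous|exact: closed_eq].
Qed.

(* Lower bound c |v|^2 <= v^T M v for M positive definite: c is the minimum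
   of the form on the (compact) unit sphere. *)
Lemma posdef_lb n (M : 'M[R]_n) : posdef M ->
  exists2 c : R, 0 < c & forall v, c * `|v| ^+ 2 <= qform M v.
Proof.
case: n M => [|n] M Mpos.
  by exists 1 => // v; rewrite (flatmx0 v) normr0 expr2 !mulr0 /qform bformE big_ord0.
pose g (w : 'rV[R]_n.+1) := qform M w^T.
pose S := [set w : 'rV[R]_n.+1 | `|w| = 1].
have gc : continuous g.
  move=> w; apply: qform_continuous_comp => i.
  have -> : (fun y : 'rV[R]_n.+1 => y^T i 0) = (fun y => y 0 i).
    by apply: funext => y; rewrite mxE.
  exact: coord_continuous.
have S0 : S !=set0.
  by exists (delta_mx 0 0); exact: mx_norm_delta.
have [w0 w0S w0min] :=
  compact_EVT_min S0 (@unit_sphere_compact n.+1) (continuous_subspaceT gc).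
exists (g w0).
  apply: Mpos; apply/eqP => /(congr1 trmx); rewrite trmxK trmx0 => w00.
  by move: w0S; rewrite inE /S /= w00 normr0 => /eqP; rewrite eq_sym oner_eq0.
move=> v; have [->|v0] := eqVneq v 0.
  by rewrite normr0 expr2 !mulr0 /qform /bform trmx0 !mul0mx mxE.
have nv : 0 < `|v| by rewrite normr_gt0.
have := w0min (`|v|^-1 *: v^T); rewrite inE /S /= mx_normZ mx_norm_trmx normfV normr_id.
rewrite mulVf ?gt_eqF // => /(_ erefl); rewrite /g linearZ /= trmxK qformZ.
by rewrite -ler_pdivlMr ?exprn_gt0 // mulrC -exprVn.
Qed.

Lemma is_derive_coord m k (x : R -> 'M[R]_(m, k)) (t : R) dx i j :
  is_derive t 1 x dx -> is_derive t 1 (fun s => x s i j) (dx i j).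
Proof.
move=> [xd <-]; apply: DeriveDef; first exact: (derivable_mxP x t 1).1 xd i j.
by rewrite derive_mx // mxE.
Qed.

Lemma is_derive_bform n (M : 'M[R]_n) (x y : R -> 'cV[R]_n) (t : R) dx dy :
  is_derive t 1 x dx -> is_derive t 1 y dy ->
  is_derive t 1 (fun s => bform M (x s) (y s)) (bform M dx (y t) + bform M (x t) dy).
Proof.
move=> xd yd.
have D i j := is_deriveM (is_deriveM (is_derive_coord i 0 xd)
  (is_derive_cst (M i j) t 1)) (is_derive_coord j 0 yd).
have -> : (fun s => bform M (x s) (y s)) =
    \sum_i \sum_j ((fun s => x s i 0) * cst (M i j) * (fun s => y s j 0)).
  by apply: funext => s; rewrite bformE fct_sumE; apply: eq_bigr => i _; rewrite fct_sumE.
apply: is_derive_eq (is_derive_sum (fun i => is_derive_sum (D i))) _.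
rewrite !bformE -big_split /=; apply: eq_bigr => i _.
rewrite -big_split /=; apply: eq_bigr => j _.
change (x t i 0 * M i j * dy j 0 + y t j 0 * (x t i 0 * 0 + M i j * dx i 0) =
  dx i 0 * M i j * y t j 0 + x t i 0 * M i j * dy j 0); ring.
Qed.

End QuadraticForms.

Section ExponentialDecay.
Variable R : realType.

Lemma derive_le0_nonincreasing (W dW : R -> R) a b : a <= b ->
  {within `[a, b], continuous W} ->
  (forall t, a < t < b -> is_derive t 1 W (dW t) /\ dW t <= 0) ->
  W b <= W a.
Proof.
rewrite le_eqVlt => /predU1P[-> //|ab] Wc Wd.
have Wd' t : t \in `]a, b[ -> is_derive t 1 W (dW t) by rewrite in_itv /= => /Wd[].
have [c cab WE] := MVT ab Wd' Wc.
rewrite -subr_le0 WE; apply: mulr_le0_ge0; last by rewrite subr_ge0 ltW.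
by move: cab; rewrite in_itv /= => /Wd[].
Qed.

(* The same conclusion when the derivative condition fails at finitely many
   points, listed in s: split [a, b] at each exceptional point. *)
Lemma nonincreasing_except_seq (W dW : R -> R) (s : seq R) a b : a <= b ->
  {within `[a, b], continuous W} ->
  (forall t, a < t < b -> t \notin s -> is_derive t 1 W (dW t) /\ dW t <= 0) ->
  W b <= W a.
Proof.
elim: s a b => [|u s IH] a b ab Wc Wd.
  by apply: derive_le0_nonincreasing => // t tab; exact: Wd.
have [/andP[au ub]|uab] := boolP (a < u < b); last first.
  apply: IH => // t tab ts; apply: Wd; rewrite // in_cons negb_or ts andbT.
  by apply: contraNneq uab => <-.
have notin t : t != u -> t \notin s -> t \notin u :: s.
  by rewrite in_cons => /negbTE ->.
apply: (@le_trans _ _ (W u)).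
- apply: IH (ltW ub) _ _ => [|t /andP[ut tb] ts].
    by apply: continuous_subspaceW Wc; apply: subset_itv; rewrite bnd_simp // ltW.
  by apply: Wd; [rewrite (lt_trans au ut) | apply: notin ts; rewrite gt_eqF].
- apply: IH (ltW au) _ _ => [|t /andP[a_t tu] ts].
    by apply: continuous_subspaceW Wc; apply: subset_itv; rewrite bnd_simp // ltW.
  by apply: Wd; [rewrite a_t (lt_trans tu ub) | apply: notin ts; rewrite lt_eqF].
Qed.

Lemma nonincreasing_except (W dW : R -> R) (S : set R) a b :
  finite_set (S `&` `[a, b]) -> a <= b -> {within `[a, b], continuous W} ->
  (forall t, a < t < b -> ~ S t -> is_derive t 1 W (dW t) /\ dW t <= 0) ->
  W b <= W a.
Proof.
move=> /finite_seqP[s sE] ab Wc Wd.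
apply: (nonincreasing_except_seq (s := s)) => // t /andP[a_t tb] ts.
apply: Wd; first by rewrite a_t.
move=> St; move: ts; apply/negP/negPn.
have : (S `&` `[a, b]) t by split => //; rewrite /= in_itv /= !ltW.
by rewrite sE.
Qed.

Lemma is_derive_expRM (a u : R) :
  is_derive u 1 (fun s => expR (a * s)) (a * expR (a * u)).
Proof.
have lin : is_derive u 1 (fun s : R => a * s) a.
  by apply: is_derive_eq (is_deriveZ a (is_derive_id u 1)) _; rewrite /GRing.scale /= mulr1.
by rewrite mulrC; exact: (is_derive1_comp (is_derive_expR _) lin).
Qed.

(* Comparison principle: v' <= -a v off a finite set of times yields
   v t <= e^{-a (t - t0)} v t0; indeed t |-> e^{a t} v t does not increase. *)
Lemma exp_decay (v dv : R -> R) (S : set R) a t0 t :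
  finite_set (S `&` `[t0, t]) -> t0 <= t -> {within `[t0, t], continuous v} ->
  (forall u, t0 < u < t -> ~ S u -> is_derive u 1 v (dv u) /\ dv u <= - a * v u) ->
  v t <= expR (- a * (t - t0)) * v t0.
Proof.
move=> Sfin t0t vc vd.
pose W := (fun u => expR (a * u)) * v.
pose dW u := expR (a * u) * dv u + v u * (a * expR (a * u)).
have : W t <= W t0.
  apply: (nonincreasing_except Sfin t0t).
    have ec : continuous (fun u => expR (a * u)).
      move=> u; apply/differentiable_continuous/derivable1_diffP.
      by case: (is_derive_expRM a u).
    by move=> u; apply: continuousM (vc u); exact: continuous_subspaceT.
  move=> u ut Su; have [vdu dvle] := vd u ut Su; split.
    exact: is_deriveM (is_derive_expRM a u) vdu.
  by rewrite /GRing.scale /=; have := expR_gt0 (a * u); nra.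
rewrite /W /= => Wle.
rewrite -(ler_pM2l (expR_gt0 (a * t))) mulrA -expRD.
by have -> : a * t + - a * (t - t0) = a * t0 by ring.
Qed.

End ExponentialDecay.

Section LyapunovStability.
Variable R : realType.

Definition lie_derivative n (P : 'M[R]_n) (F : 'cV[R]_n) (v : 'cV[R]_n) : R :=
  bform P F v + bform P v F.

Lemma lyapunov_decay n (F : R -> 'cV[R]_n -> 'cV[R]_n) (P : 'M[R]_n) (a : R) :
  (forall t v, 0 < t -> lie_derivative P (F t v) v <= - a * qform P v) ->
  forall t0 x, 0 <= t0 -> ode_solution F t0 x -> forall t, t0 <= t ->
  qform P (x t) <= expR (- a * (t - t0)) * qform P (x t0).
Proof.
move=> dV t0 x t0_ge0 [xc [S [Sfin xd]]] t t0t.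
pose dV_along u := lie_derivative P (F u (x u)) (x u).
apply: (exp_decay (v := fun u => qform P (x u)) (dv := dV_along) (Sfin t0 t) t0t).
  have xc' : {within `[t0, t], continuous x}.
    by apply: continuous_subspaceW xc => u /=; rewrite !in_itv /= => /andP[-> _].
  by move=> u; apply: (continuous_comp (xc' u)); exact: qform_continuous.
move=> u /andP[t0u ut] Su; split; first exact: is_derive_bform (xd u t0u Su) (xd u t0u Su).
exact: dV (le_lt_trans t0_ge0 t0u).
Qed.

Lemma exp_estimate_stay n (F : R -> 'cV[R]_n -> 'cV[R]_n) (k a r : R) :
  1 <= k -> 0 < a -> 0 < r ->
  (forall t0 x, 0 <= t0 -> ode_solution F t0 x -> forall t, t0 <= t ->
     `|x t| ^+ 2 <= k * expR (- a * (t - t0)) * `|x t0| ^+ 2) ->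
  forall t0 x, 0 <= t0 -> ode_solution F t0 x ->
    `|x t0| < r / k -> forall t, t0 <= t -> `|x t| < r.
Proof.
move=> k1 a0 r0 est t0 x t00 sol x0 t t0t.
have k0 : 0 < k := lt_le_trans ltr01 k1.
have := est t0 x t00 sol t t0t; set e := expR _ => xt.
have e0 : 0 < e := expR_gt0 _.
have e1 : e <= 1 by rewrite expR_le1 mulNr oppr_le0 mulr_ge0 ?subr_ge0 // ltW.
move: x0; rewrite ltr_pdivlMr // => x0.
have y0 := normr_ge0 (x t0); have y := normr_ge0 (x t).
have bound0 : k * e * `|x t0| ^+ 2 <= (`|x t0| * k) ^+ 2.
  have ke : k * e <= k * k by rewrite ler_pM2l // (le_trans e1 k1).
  have := exprn_ge0 2 y0; rewrite exprMn; nra.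
have yk0 : 0 <= `|x t0| * k by rewrite mulr_ge0 // ltW.
have bound_r : (`|x t0| * k) ^+ 2 < r ^+ 2 by nra.
nra.
Qed.

(* An estimate |x t|^2 <= k e^{-a (t - t0)} |x t0|^2, uniform in t0 and
   valid for all solutions, yields global uniform asymptotic stability:
   stability and boundedness by [exp_estimate_stay], attractivity by waiting
   until the exponential factor drops below eta^2 / (eta^2 + k r^2). *)
Lemma guas_of_exp_estimate n (F : R -> 'cV[R]_n -> 'cV[R]_n) (k a : R) :
  1 <= k -> 0 < a -> (forall t, 0 <= t -> F t 0 = 0) ->
  (forall t0 x, 0 <= t0 -> ode_solution F t0 x -> forall t, t0 <= t ->
     `|x t| ^+ 2 <= k * expR (- a * (t - t0)) * `|x t0| ^+ 2) ->
  GUAS F.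
Proof.
move=> k1 a0 F0 est; have k0 : 0 < k := lt_le_trans ltr01 k1.
split => //; split.
  move=> e e0; exists (e / k); split; first exact: divr_gt0.
  exact: exp_estimate_stay k1 a0 e0 est.
split.
  move=> r r0; exists (r * k); split; first exact: mulr_gt0.
  move=> t0 x t00 sol x0; apply: (exp_estimate_stay k1 a0 _ est) => //.
    exact: mulr_gt0.
  by rewrite mulfK ?gt_eqF.
move=> r eta r0 eta0.
pose q := eta ^+ 2 / (eta ^+ 2 + k * r ^+ 2).
have eta2 : 0 < eta ^+ 2 by rewrite exprn_gt0.
have kr2 : 0 < k * r ^+ 2 by rewrite mulr_gt0 ?exprn_gt0.
have q0 : 0 < q by rewrite divr_gt0 // addr_gt0.
have qE : q * (eta ^+ 2 + k * r ^+ 2) = eta ^+ 2.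
  by rewrite /q mulfVK // gt_eqF // addr_gt0.
have q1 : q <= 1 by nra.
have kqr : k * q * r ^+ 2 < eta ^+ 2 by nra.
have T0 : 0 <= - ln q / a by rewrite divr_ge0 ?oppr_ge0 ?ln_le0 // ltW.
exists (- ln q / a); split => // t0 x t00 sol x0 t tT.
have e_le_q : expR (- a * (t - t0)) <= q.
  rewrite -[leRHS](lnK q0) ler_expR mulNr lerNl.
  by rewrite -ler_pdivrMl // mulrC; move: tT; rewrite -lerBrDl.
have t0t : t0 <= t by apply: le_trans tT; rewrite lerDl.
have y0r : `|x t0| ^+ 2 <= r ^+ 2 by have := normr_ge0 (x t0); nra.
have ekq : k * expR (- a * (t - t0)) * `|x t0| ^+ 2 <= k * q * r ^+ 2.
  by apply: ler_pM; rewrite ?mulr_ge0 ?exprn_ge0 ?expR_ge0 ?ler_wpM2l // ltW.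
have := est t0 x t00 sol t t0t; have := normr_ge0 (x t); nra.
Qed.

Lemma quadratic_lyapunov_guas n (F : R -> 'cV[R]_n -> 'cV[R]_n) (P : 'M[R]_n) (a : R) :
  posdef P -> 0 < a -> (forall t, 0 <= t -> F t 0 = 0) ->
  (forall t v, 0 < t -> lie_derivative P (F t v) v <= - a * qform P v) ->
  GUAS F.
Proof.
move=> Ppos a0 F0 dV.
have [c1 c1_gt0 lb] := posdef_lb Ppos; have [c2 c2_gt0 ub] := qform_ub P.
have k1 : 1 <= 1 + c2 / c1 by rewrite lerDl divr_ge0 // ltW.
apply: (guas_of_exp_estimate k1 a0 F0) => t0 x t00 sol t t0t.
have := lyapunov_decay dV t00 sol t0t; set e := expR _ => decay.
have e0 : 0 < e := expR_gt0 _.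
(* c1 |x t|^2 <= V (x t) <= e V (x t0) <= e c2 |x t0|^2 *)
have sandwich : c1 * `|x t| ^+ 2 <= e * (c2 * `|x t0| ^+ 2).
  by apply: le_trans (lb _) _; apply: le_trans decay _; rewrite ler_pM2l.
rewrite -(ler_pM2l c1_gt0).
have -> : c1 * ((1 + c2 / c1) * e * `|x t0| ^+ 2) = (c1 + c2) * (e * `|x t0| ^+ 2).
  by field; rewrite gt_eqF.
have := exprn_ge0 2 (normr_ge0 (x t0)); nra.
Qed.

End LyapunovStability.

Section PassiveNonlinearity.
Variable R : realType.

(* A scalar function, continuous at 0, with s * g s >= 0 for all s must
   vanish at 0: g 0 is a limit of nonnegative values from the right and of
   nonpositive values from the left. *)
Lemma sign_condition_zero (g : R -> R) :
  {for 0, continuous g} -> (forall s, 0 <= s * g s) -> g 0 = 0.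
Proof.
move=> gc gs; apply/eqP; rewrite eq_le; apply/andP; split.
- rewrite leNgt; apply/negP => g0; near (0 : R)^'- => s.
  have s_lt0 : s < 0 by near: s; exists 1 => [|y _ ?]; first exact: ltr01.
  have gs_gt0 : 0 < g s by near: s; exact: cvgr_gt (cvg_at_left_filter gc) _ g0.
  by have := gs s; rewrite leNgt nmulr_rlt0 // gs_gt0.
- rewrite leNgt; apply/negP => g0; near (0 : R)^'+ => s.
  have s_gt0 : 0 < s by near: s; exists 1 => [|y _ ?]; first exact: ltr01.
  have gs_lt0 : g s < 0 by near: s; exact: cvgr_lt (cvg_at_right_filter gc) _ g0.
  by have := gs s; rewrite leNgt pmulr_rlt0 // gs_lt0.
Unshelve. all: by end_near.
Qed.

Lemma loc_lipschitz_continuous p (f : R -> 'cV[R]_p -> 'cV[R]_p) :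
  loc_lipschitz_in_z f -> forall t, continuous (f t).
Proof.
move=> flip t z0; have [r [c [r0 lip]]] := flip t z0.
have c1 : 0 < `|c| + 1 by rewrite ltr_pwDr // normr_ge0.
apply/(@cvgrPdist_lt _ _ _ (nbhs z0)) => e e0; near=> z.
have zr : `|z0 - z| < r by near: z; apply: (@cvgr_dist_lt _ _ _ (nbhs z0) _ id).
have ze : `|z0 - z| < e / (`|c| + 1).
  by near: z; apply: (@cvgr_dist_lt _ _ _ (nbhs z0) _ id) => //; exact: divr_gt0.
have lipz := lip z0 z; rewrite subrr normr0 distrC in lipz.
apply: le_lt_trans (lipz r0 zr) _.
move: ze; rewrite ltr_pdivlMr // mulrC => ze; apply: le_lt_trans ze.
apply: ler_wpM2r; first exact: normr_ge0.
by apply: le_trans (ler_norm c) _; rewrite lerDl.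
Unshelve. all: by end_near.
Qed.

(* A passive nonlinearity that is continuous in z vanishes at z = 0:
   apply the sign condition along each coordinate axis. *)
Lemma passive_zero p (f : R -> 'cV[R]_p -> 'cV[R]_p) t :
  passive f -> continuous (f t) -> f t 0 = 0.
Proof.
move=> fpas fc; apply/matrixP => i j; rewrite (ord1 j) [RHS]mxE.
rewrite -[X in f t X](scale0r (delta_mx i 0 : 'cV[R]_p)).
apply: (sign_condition_zero (g := fun s => f t (s *: delta_mx i 0) i 0)) => [|s].
  have axis_c : {for 0, continuous (fun s : R => f t (s *: delta_mx i 0))}.
    exact: continuous_comp (@scalel_continuous _ _ (delta_mx i 0 : 'cV[R]_p) 0) (fc _).
  exact: continuous_comp axis_c (@coord_continuous _ _ _ i 0 _).
have := fpas t (s *: delta_mx i 0).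
have -> : (s *: delta_mx i 0 : 'cV[R]_p)^T = s *: (delta_mx 0 i : 'rV[R]_p).
  by apply/matrixP => k l; rewrite !mxE andbC.
by rewrite -scalemxAl -rowE !mxE.
Qed.

End PassiveNonlinearity.

Section LyapunovMatrices.
Variable R : realType.

Lemma posdef_unitmx n (S : 'M[R]_n) : posdef S -> S \in unitmx.
Proof.
move=> Spos; rewrite unitmxE unitfE; apply/negP => /det0P[v v0 vS].
have vT : v^T != 0 by apply: contraNneq v0 => vT0; rewrite -(trmxK v) vT0 trmx0.
by have := Spos _ vT; rewrite /qform /bform trmxK vS mul0mx mxE ltxx.
Qed.

Lemma negdef_posdefN n (M : 'M[R]_n) : negdef M -> posdef (- M).
Proof.
by move=> Mneg v v0; rewrite /qform /bform mulmxN mulNmx mxE oppr_gt0; exact: Mneg.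
Qed.

Lemma posdef_congr n (M Q : 'M[R]_n) : Q \in unitmx -> posdef M -> posdef (Q^T *m M *m Q).
Proof.
move=> Qu Mpos v v0.
have Qv0 : Q *m v != 0.
  by apply: contraNneq v0 => Qv; rewrite -(mul1mx v) -(mulVmx Qu) -mulmxA Qv mulmx0.
by have := Mpos _ Qv0; rewrite /qform /bform trmx_mul !mulmxA.
Qed.

Lemma posdef_invmx n (S : 'M[R]_n) : S^T = S -> posdef S -> posdef (invmx S).
Proof.
move=> Ssym Spos; have Su := posdef_unitmx Spos.
have -> : invmx S = (invmx S)^T *m S *m invmx S.
  by rewrite trmx_inv Ssym -mulmxA mulmxV // mulmx1.
by apply: posdef_congr Spos; rewrite unitmx_inv.
Qed.

(* Dual form of the Lyapunov inequality: S Acl^T + Acl S < 0 with S = S^T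
   invertible gives Acl^T P + P Acl < 0 for P = S^-1, by congruence with P. *)
Lemma dual_lyapunov_inequality n (S Acl : 'M[R]_n) : S^T = S -> S \in unitmx ->
  negdef (S *m Acl^T + Acl *m S) -> posdef (- (Acl^T *m invmx S + invmx S *m Acl)).
Proof.
move=> Ssym Su neg.
have -> : - (Acl^T *m invmx S + invmx S *m Acl) =
    (invmx S)^T *m (- (S *m Acl^T + Acl *m S)) *m invmx S.
  rewrite trmx_inv Ssym mulmxN mulNmx mulmxDr mulmxDl !mulmxA mulVmx // mul1mx.
  by rewrite -!mulmxA mulmxV // mulmx1 addrC.
by apply: posdef_congr (negdef_posdefN neg); rewrite unitmx_inv.
Qed.

Lemma lie_derivative_lure n p (P Acl : 'M[R]_n) (L : 'M[R]_(n, p)) (H : 'M[R]_(p, n))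
    (v : 'cV[R]_n) (w : 'cV[R]_p) :
  P^T = P -> P *m L = - H^T ->
  lie_derivative P (Acl *m v + L *m w) v =
    - qform (- (Acl^T *m P + P *m Acl)) v - ((H *m v)^T *m w) 0 0 *+ 2.
Proof.
move=> Psym PL.
have LP : L^T *m P = - H by rewrite -[P]Psym -trmx_mul PL linearN /= trmxK.
have trE (X : 'M[R]_1) : X^T 0 0 = X 0 0 by rewrite mxE.
have wHv : (w^T *m H *m v) 0 0 = (v^T *m H^T *m w) 0 0.
  by rewrite -trE !trmx_mul trmxK mulmxA.
have addE (X Y : 'M[R]_1) : (X + Y) 0 0 = X 0 0 + Y 0 0 by rewrite mxE.
have oppE (X : 'M[R]_1) : (- X) 0 0 = - X 0 0 by rewrite mxE.
have E1 : bform P (Acl *m v + L *m w) v = bform (Acl^T *m P) v v - ((H *m v)^T *m w) 0 0.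
  rewrite /bform linearD /= !trmx_mul mulmxDl mulmxDl addE.
  by rewrite -(mulmxA w^T) LP mulmxN mulNmx oppE wHv !mulmxA.
have E2 : bform P v (Acl *m v + L *m w) = bform (P *m Acl) v v - ((H *m v)^T *m w) 0 0.
  rewrite /bform mulmxDr addE (mulmxA (v^T *m P) L) -(mulmxA v^T P L) PL.
  by rewrite mulmxN mulNmx oppE trmx_mul !mulmxA.
rewrite /lie_derivative E1 E2 /qform /bform mulmxN mulNmx mulmxDr mulmxDl oppE opprK.
by rewrite addE !mulmxA; ring.
Qed.

End LyapunovMatrices.

Section DataDrivenLure.
Variable R : realType.

(* For x' = Acl x + L f(t, H x) with P = P^T, P L = -H^T and
   -(Acl^T P + P Acl) positive definite, passivity of f makes V = x^T P x
   decrease at an exponential rate: V' <= -x^T N x <= -(c3 / c2) V. *)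
Lemma lure_lyapunov_decrease n p (P Acl : 'M[R]_n) (L : 'M[R]_(n, p))
    (H : 'M[R]_(p, n)) (f : R -> 'cV[R]_p -> 'cV[R]_p) :
  P^T = P -> P *m L = - H^T -> posdef (- (Acl^T *m P + P *m Acl)) -> passive f ->
  exists2 a : R, 0 < a & forall t v,
    lie_derivative P (Acl *m v + L *m f t (H *m v)) v <= - a * qform P v.
Proof.
move=> Psym PL Npos fpas.
have [c3 c3_gt0 lb] := posdef_lb Npos; have [c2 c2_gt0 ub] := qform_ub P.
exists (c3 / c2) => [|t v]; first exact: divr_gt0.
rewrite (lie_derivative_lure Acl v _ Psym PL).
have Vub : c3 / c2 * qform P v <= c3 * `|v| ^+ 2.
  apply: le_trans (ler_wpM2l (ltW (divr_gt0 c3_gt0 c2_gt0)) (ub v)) _.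
  by rewrite mulrA divfK ?gt_eqF.
have := fpas t (H *m v); have := lb v; lra.
Qed.

Lemma closed_loop_from_data n m p T (A : 'M[R]_n) (B : 'M[R]_(n, m))
    (L : 'M[R]_(n, p)) (U0 : 'M[R]_(m, T)) (X0 X1 : 'M[R]_(n, T))
    (F0 : 'M[R]_(p, T)) (Y : 'M[R]_(T, n)) :
  X1 = A *m X0 + B *m U0 + L *m F0 -> X0 *m Y \in unitmx ->
  (X1 - L *m F0) *m Y = (A + B *m (U0 *m Y *m invmx (X0 *m Y))) *m (X0 *m Y).
Proof. by move=> -> Su; rewrite addrK !mulmxDl -!mulmxA mulVmx // mulmx1. Qed.

End DataDrivenLure.

Theorem mainTheorem3 (R : realType) (n m p T : nat)
    (A : 'M[R]_n) (B : 'M[R]_(n, m)) (L : 'M[R]_(n, p)) (H : 'M[R]_(p, n))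
    (U0 : 'M[R]_(m, T)) (X0 X1 : 'M[R]_(n, T)) (F0 : 'M[R]_(p, T))
    (Y : 'M[R]_(T, n)) :
  X1 = A *m X0 + B *m U0 + L *m F0 ->
  sym_posdef (X0 *m Y) ->
  negdef (Y^T *m (X1 - L *m F0)^T + (X1 - L *m F0) *m Y) ->
  L + X0 *m Y *m H^T = 0 ->
  let K := U0 *m Y *m invmx (X0 *m Y) in
  forall f : R -> 'cV[R]_p -> 'cV[R]_p,
    piecewise_continuous_in_t f -> loc_lipschitz_in_z f -> passive f ->
    GUAS (fun t (x : 'cV[R]_n) => (A + B *m K) *m x + L *m f t (H *m x)).
Proof.
move=> hX [Ssym Spos] Mneg hL K f _ flip fpas.
have Su := posdef_unitmx Spos.
(* the data LMI is the dual Lyapunov inequality for Acl = A + B K and S = X0 Y *)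
have dual : negdef (X0 *m Y *m (A + B *m K)^T + (A + B *m K) *m (X0 *m Y)).
  by move: Mneg; rewrite -trmx_mul (closed_loop_from_data hX Su) trmx_mul Ssym.
have Npos := dual_lyapunov_inequality Ssym Su dual.
(* the structural condition L = - X0 Y H^T becomes P L = - H^T for P = (X0 Y)^-1 *)
have PL : invmx (X0 *m Y) *m L = - H^T.
  have -> : L = - (X0 *m Y *m H^T) by apply/eqP; rewrite -addr_eq0 hL.
  by rewrite mulmxN mulmxA mulVmx // mul1mx.
have Psym : (invmx (X0 *m Y))^T = invmx (X0 *m Y) by rewrite trmx_inv Ssym.
have [a a_gt0 decrease] := lure_lyapunov_decrease Psym PL Npos fpas.
apply: (quadratic_lyapunov_guas (posdef_invmx Ssym Spos) a_gt0) => [t _|t v _].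
  have f0 := passive_zero fpas (@loc_lipschitz_continuous _ _ _ flip t).
  by rewrite !mulmx0 f0 mulmx0 addr0.
exact: decrease.
Qed.
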